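(* There exists a universal constant $c>0$ such that the following holds. Let $(E,d)$ be a complete separable metric space with a Borel probability measure $\mu$, let $k\geq1$, and let $A_1,\ldots,A_k$ be measurable sets with $(\mu(A_1),\ldots,\mu(A_k))\in\Delta_k$. Let $r=\frac12\min_{i\neq j}d(A_i,A_j)$ and $A_0=E\setminus\left(\bigcup_i A_i\right)_r$. Then \[ \lambda^{(k)}\leq\frac{1}{r^2}\,\psi\left(\frac1c\min_{i}\ln\frac{\mu(A_i)}{\mu(A_0)}\right), \] where $\psi(x)=\max(x,x^2)$.
   Context: For $A,B\subset E$, $d(A,B)=\inf\{d(x,y):x\in A,y\in B\}$. For $A\subset E$ and $r>0$, $A_r=\{x\in E:\exists y\in A,\ d(x,y)<r\}$. $\Delta_k$ is the set of $(a_1,\ldots,a_k)\in[0,1]^k$ with $\sum_j a_j\leq1$ and $a_i+\sum_j a_j\geq1$ for every $i$. The local Lipschitz constant of $f:E\to\mathbb{R}$ is $|\nabla f|(x)=0$ if $x$ is isolated and $\limsup_{y\to x}\frac{|f(x)-f(y)|}{d(x,y)}$ otherwise; $H^1(\mu)=\{f\in L^2(\mu):\int|\nabla f|^2d\mu<\infty\}$; $\lambda^{(k)}=\inf_{V\subset H^1(\mu),\dim V=k+1}\sup_{f\in V\setminus\{0\}}\frac{\int|\nabla f|^2d\mu}{\int f^2d\mu}$. *)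

From HB Require Import structures.
From mathcomp Require Import all_boot all_order all_algebra.
From mathcomp Require Import all_classical all_reals all_analysis.
From mathcomp Require Import Rstruct Rstruct_topology.

Set Implicit Arguments.
Unset Strict Implicit.
Unset Printing Implicit Defensive.

Import Order.TTheory GRing.Theory Num.Theory.
Local Open Scope classical_set_scope.
Local Open Scope ring_scope.

Section MetricDefs.
Variables (R : realType) (T : Type) (d : T -> T -> R).

Definition is_metric : Prop :=
  [/\ (forall x y, 0 <= d x y),
      (forall x y, d x y = 0 <-> x = y),
      (forall x y, d x y = d y x) &
      (forall x y z, d x z <= d x y + d y z)].

Definition metric_complete : Prop :=
  forall u : nat -> T,
    (forall e : R, 0 < e -> exists N : nat, forall m n : nat,
        (N <= m)%N -> (N <= n)%N -> d (u m) (u n) < e) ->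
    exists x : T, forall e : R, 0 < e -> exists N : nat,
        forall n : nat, (N <= n)%N -> d (u n) x < e.

Definition metric_separable : Prop :=
  exists s : nat -> T, forall (x : T) (e : R), 0 < e -> exists n : nat, d x (s n) < e.

Definition metric_open (U : set T) : Prop :=
  forall x, U x -> exists2 e : R, 0 < e & forall y, d x y < e -> U y.

(* d(A,B) = inf { d(x,y) : x in A, y in B }  (= +oo if A or B is empty) *)
Definition set_dist (A B : set T) : \bar R :=
  ereal_inf [set (d x y)%:E | x in A & y in B].

Definition enlarge (A : set T) (r : \bar R) : set T :=
  [set x | exists2 y, A y & ((d x y)%:E < r)%E].

Definition isolated (x : T) : Prop :=
  exists2 e : R, 0 < e & forall y, d x y < e -> y = x.

Definition local_lip (f : T -> R) (x : T) : \bar R :=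
  if `[< isolated x >] then 0%E
  else ereal_inf [set ereal_sup
          [set (`|f x - f y| / d x y)%:E | y in [set y | 0 < d x y < e]]
        | e in [set e : R | 0 < e]].

End MetricDefs.

Section SpectralDefs.
Variables (R : realType) (dsp : measure_display) (T : measurableType dsp)
  (d : T -> T -> R) (mu : {measure set T -> \bar R}).

Local Open Scope ereal_scope.

Definition H1 (f : T -> R) : Prop :=
  [/\ measurable_fun setT f,
      \int[mu]_x ((f x) ^+ 2)%:E < +oo &
      \int[mu]_x (local_lip d f x * local_lip d f x) < +oo].

Definition rayleigh (g : T -> R) : \bar R :=
  (\int[mu]_x (local_lip d g x * local_lip d g x)) *
  ((fine (\int[mu]_x ((g x) ^+ 2)%:E))^-1)%:E.

(* A family of n functions of H^1(mu), linearly independent in L^2(mu),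
   i.e. spanning an n-dimensional subspace V of H^1(mu) *)
Definition H1_indep_family (n : nat) (f : 'I_n -> T -> R) : Prop :=
  (forall i, H1 (f i)) /\
  (forall c : 'I_n -> R,
     {ae mu, forall x, (\sum_(i < n) c i * f i x)%R = 0%R} ->
     forall i, c i = 0%R).

(* lambda^(k) = inf_{V <= H^1, dim V = k+1} sup_{f in V \ 0} Rayleigh(f) *)
Definition lambda_k (k : nat) : \bar R :=
  ereal_inf [set ereal_sup
      [set rayleigh (fun x => \sum_(i < k.+1) c i * f i x)%R
        | c in [set c : 'I_k.+1 -> R | exists i, c i != 0%R]]
    | f in [set f : 'I_k.+1 -> T -> R | H1_indep_family f]].

End SpectralDefs.

Definition in_Delta (R : realType) (k : nat) (a : 'I_k -> R) : Prop :=
  [/\ (forall i, 0 <= a i <= 1),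
      \sum_(j < k) a j <= 1 &
      (forall i, 1 <= a i + \sum_(j < k) a j)].

Definition psi (R : realType) (x : R) : R := Num.max x (x ^+ 2).

Section Bound.
Variables (R : realType) (dsp : measure_display) (T : measurableType dsp)
  (d : T -> T -> R) (mu : {measure set T -> \bar R}) (k : nat)
  (A : 'I_k -> set T).

Local Open Scope ereal_scope.

(* r = (1/2) min_{i <> j} d(A_i, A_j)   (extended real; +oo when k = 1) *)
Definition half_min_dist : \bar R :=
  ((1 / 2)%:E * ereal_inf [set set_dist d (A p.1) (A p.2)
                          | p in [set p : 'I_k * 'I_k | p.1 != p.2]]).

Definition A0 : set T :=
  ~` enlarge d (\bigcup_(i in [set: 'I_k]) A i) half_min_dist.

Definition min_log_ratio : R :=
  fine (\big[mine/+oo]_(i < k)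
          (ln (fine (mu (A i)) / fine (mu A0)))%:E).

(* The right-hand side (1/r^2) psi((1/c) min_i ln(mu A_i / mu A_0)).
   In the degenerate cases (r = 0, r = +oo, mu A_0 = 0 or some mu A_i = 0)
   the formula is read as +oo. *)
Definition bound_rhs (c : R) : \bar R :=
  if `[< [/\ (0 < half_min_dist < +oo), (0 < mu A0) &
            (forall i, 0 < mu (A i))] >]
  then ((fine half_min_dist ^+ 2)^-1 * psi (c^-1 * min_log_ratio))%:E
  else +oo.

End Bound.

From HB Require Import structures.
From mathcomp Require Import all_boot all_order all_algebra.
From mathcomp Require Import all_classical all_reals all_analysis.
From mathcomp Require Import Rstruct Rstruct_topology.
From mathcomp Require Import ring lra.
From mathcomp Require Import measurable_realfun.
Import Order.TTheory GRing.Theory Num.Theory.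
Local Open Scope classical_set_scope.
Local Open Scope ring_scope.
Set Implicit Arguments.
Unset Strict Implicit.

(* With r the half separation, a_i = mu A_i, a_0 = mu A_0 and
   m = min_i ln (a_i / a_0), take k + 1 functions with disjoint plateaux C_p
   (where they equal 1 and the others vanish) and disjoint transition layers S_p
   (where they are L_p-Lipschitz; elsewhere they are locally constant).  For any
   combination g, |grad g|^2 <= sum c_p^2 L_p^2 1_{S_p} and g^2 >= sum c_p^2 1_{C_p},
   so lambda^(k) <= max_p L_p^2 mu S_p / mu C_p.
   For i >= 1 the function is 1 on A_i and 0 beyond distance r/3 of A_i
   (L = 6/r); its layer lies outside A_0 and all A_j, and by the Delta_k
   condition this region has mass at most a_min - a_0 <= m a_i.
   The remaining function is 1 beyond distance s + h of the union of the A_i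
   and 0 below s, with h = r/(4N), N ~ 2m.  As ln mu(dist >= t) drops by at
   most m between t = r/2 and t = r, a pigeonhole choice of s on a grid of
   step 2h makes mu(dist >= s) <= (1 + 2m/N) mu(dist >= s + 2h), which bounds
   the mass of its layer.  Altogether lambda^(k) <= 64 m (m + 1) / r^2. *)

Section DistanceToSet.
Variables (R : realType) (T : Type) (d : T -> T -> R).
Hypothesis hd : is_metric d.

Lemma is_metric_ge0 x y : 0 <= d x y. Proof. by case: hd. Qed.
Lemma is_metric_sym x y : d x y = d y x. Proof. by case: hd. Qed.
Lemma is_metric_triangle x y z : d x z <= d x y + d y z. Proof. by case: hd. Qed.
Lemma is_metric_xx x : d x x = 0. Proof. by case: hd => _ h _ _; exact: (proj2 (h x x)). Qed.
Lemma is_metric_eq0 x y : d x y = 0 -> x = y. Proof. by case: hd => _ h _ _; exact: (proj1 (h x y)). Qed.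

Definition dist_to (U : set T) (x : T) : R := inf [set d x y | y in U].

Variable U : set T.
Hypothesis U0 : U !=set0.

Lemma dist_to_le x y : U y -> dist_to U x <= d x y.
Proof.
by move=> Uy; apply: ge_inf; [exists 0 => _ [z _ <-]; apply: is_metric_ge0|exists y].
Qed.

Lemma dist_to_glb x a : (forall y, U y -> a <= d x y) -> a <= dist_to U x.
Proof.
have [y Uy] := U0; move=> h; apply: lb_le_inf; first by exists (d x y), y.
by move=> _ [z Uz <-]; apply: h.
Qed.

Lemma dist_to_ge0 x : 0 <= dist_to U x.
Proof. by apply: dist_to_glb => y _; apply: is_metric_ge0. Qed.

Lemma dist_to_lt x t : dist_to U x < t -> exists2 y, U y & d x y < t.
Proof.
have [y Uy] := U0.
by move=> /(inf_lt (ex_intro _ (d x y) (ex_intro2 _ _ y Uy erefl))) [_ [z Uz <-]]; exists z.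
Qed.

Lemma dist_to_eq0 x : U x -> dist_to U x = 0.
Proof. by move=> Ux; apply/le_anti; rewrite dist_to_ge0 andbT -(is_metric_xx x) dist_to_le. Qed.

Lemma dist_to_subset (V : set T) x : V `<=` U -> V !=set0 -> dist_to U x <= dist_to V x.
Proof.
move=> VU [v Vv]; apply: lb_le_inf; first by exists (d x v), v.
by move=> _ [y Vy <-]; apply/dist_to_le/VU.
Qed.

Lemma dist_to_triangle x z : dist_to U x <= d x z + dist_to U z.
Proof.
rewrite addrC -lerBlDr; apply: dist_to_glb => y Uy; rewrite lerBlDr.
by apply: le_trans (dist_to_le x Uy) _; rewrite addrC is_metric_triangle.
Qed.

Lemma dist_to_lipschitz x z : `|dist_to U x - dist_to U z| <= d x z.
Proof.
have := dist_to_triangle x z; have := dist_to_triangle z x.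
by rewrite (is_metric_sym z x) ler_norml => h1 h2; apply/andP; split; lra.
Qed.

End DistanceToSet.

Section LocallyLipschitz.
Variables (R : realType) (T : Type) (d : T -> T -> R).
Hypothesis hd : is_metric d.

Definition lipschitz_at (g : T -> R) (K : R) (x : T) : Prop :=
  exists2 e : R, 0 < e & forall y, d x y < e -> `|g x - g y| <= K * d x y.

Lemma lipschitz_at_le g K K' x : K <= K' -> lipschitz_at g K x -> lipschitz_at g K' x.
Proof.
move=> KK [e e0 h]; exists e => // y ye; apply: le_trans (h y ye) _.
by rewrite ler_wpM2r // is_metric_ge0.
Qed.

Lemma lipschitz_atD f g K1 K2 x : lipschitz_at f K1 x -> lipschitz_at g K2 x ->
  lipschitz_at (fun y => f y + g y) (K1 + K2) x.
Proof.
move=> [e1 e10 h1] [e2 e20 h2]; exists (Num.min e1 e2); first by rewrite lt_min e10.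
move=> y; rewrite lt_min => /andP[y1 y2].
rewrite (_ : f x + g x - (f y + g y) = (f x - f y) + (g x - g y)); last by ring.
by rewrite (le_trans (ler_normD _ _))// mulrDl lerD ?h1 ?h2.
Qed.

Lemma lipschitz_atZ f K c x : lipschitz_at f K x ->
  lipschitz_at (fun y => c * f y) (`|c| * K) x.
Proof.
move=> [e e0 h]; exists e => // y ye.
by rewrite -mulrBr normrM -mulrA ler_wpM2l ?h.
Qed.

Lemma lipschitz_at_sum (I : Type) (s : seq I) (c : I -> R) (F : I -> T -> R)
    (K : I -> R) x :
  (forall i, lipschitz_at (F i) (K i) x) ->
  lipschitz_at (fun y => \sum_(i <- s) c i * F i y) (\sum_(i <- s) `|c i| * K i) x.
Proof.
move=> hF; elim: s => [|i s [e e0 ih]].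
  by exists 1 => // y _; rewrite !big_nil subrr normr0 mul0r.
have [e' e'0 h] := lipschitz_atD (lipschitz_atZ (c i) (hF i)) (ex_intro2 _ _ e e0 ih).
by exists e' => // y ye; rewrite !big_cons; apply: h.
Qed.

Lemma local_lip_ge0 g x : (0 <= local_lip d g x)%E.
Proof.
rewrite /local_lip; case: asboolP => [_//|niso].
apply: le_ereal_inf_tmp => _ [e e0 <-].
have [y ye yx] : exists2 y, d x y < e & y <> x.
  apply: contrapT => hn; apply: niso; exists e => // y ye.
  by apply: contrapT => yx; apply: hn; exists y.
have y0 : 0 < d x y.
  by rewrite lt_neqAle is_metric_ge0 // andbT; apply: contra_notN yx => /eqP/esym/(is_metric_eq0 hd)->.
apply: le_ereal_sup_tmp; exists (`|g x - g y| / d x y)%:E; first by exists y => //; apply/andP.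
by rewrite lee_fin divr_ge0 // ltW.
Qed.

Lemma local_lip_le g K x : 0 <= K -> lipschitz_at g K x -> (local_lip d g x <= K%:E)%E.
Proof.
move=> K0 [e e0 he]; rewrite /local_lip; case: asboolP => _; first by rewrite lee_fin.
apply: le_trans (ereal_inf_lbound _) _; first by exists e.
by apply: ge_ereal_sup => _ [y /andP[y0 ye] <-]; rewrite lee_fin ler_pdivrMr // he.
Qed.

Lemma local_lip_sqr_le g K x : 0 <= K -> lipschitz_at g K x ->
  (local_lip d g x * local_lip d g x <= (K ^+ 2)%:E)%E.
Proof.
move=> K0 /(local_lip_le K0) hK; rewrite expr2 EFinM.
by apply: lee_pmul => //; apply: local_lip_ge0.
Qed.

End LocallyLipschitz.

Section Clamp.
Variable R : realType.

Definition clamp01 (t : R) : R := Num.min 1 (Num.max 0 t).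

Lemma clamp01_1 t : 1 <= t -> clamp01 t = 1.
Proof. by move=> h; rewrite /clamp01 (max_r (le_trans ler01 h)) min_l. Qed.

Lemma clamp01_0 t : t <= 0 -> clamp01 t = 0.
Proof. by move=> h; rewrite /clamp01 (max_l h) min_r. Qed.

Lemma clamp01_id t : 0 <= t <= 1 -> clamp01 t = t.
Proof. by case/andP=> h0 h1; rewrite /clamp01 (max_r h0) min_r. Qed.

Lemma clamp01_cases t : [\/ t <= 0 /\ clamp01 t = 0,
  0 <= t <= 1 /\ clamp01 t = t | 1 <= t /\ clamp01 t = 1].
Proof.
have [t0|t0] := leP t 0; first by apply: Or31; rewrite clamp01_0.
have [t1|t1] := leP t 1; last by apply: Or33; rewrite clamp01_1 ltW.
by apply: Or32; rewrite clamp01_id ltW ?t0.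
Qed.

Lemma clamp01_ge0 t : 0 <= clamp01 t.
Proof. by case: (clamp01_cases t) => [[_ ->]|[/andP[? ?] ->]|[_ ->]]. Qed.

Lemma clamp01_le1 t : clamp01 t <= 1.
Proof. by case: (clamp01_cases t) => [[_ ->]|[/andP[? ?] ->]|[_ ->]]. Qed.

Lemma clamp01_lipschitz u v : `|clamp01 u - clamp01 v| <= `|u - v|.
Proof.
have h1 := ler_norm (u - v); have h2 := ler_norm (v - u); rewrite distrC in h2.
rewrite ler_norml.
case: (clamp01_cases u) => [[hu ->]|[/andP[hu hu'] ->]|[hu ->]];
case: (clamp01_cases v) => [[hv ->]|[/andP[hv hv'] ->]|[hv ->]];
apply/andP; split; lra.
Qed.

Lemma clamp01_locally_const t : ~ (0 <= t <= 1) ->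
  exists2 e, 0 < e & forall s, `|t - s| < e -> clamp01 s = clamp01 t.
Proof.
move=> out; have [t0|t0] := ltP t 0.
  exists (- t); rewrite ?oppr_gt0 // => s; rewrite ltr_norml => /andP[ts _].
  by rewrite !clamp01_0 //; lra.
have t1 : 1 < t by rewrite ltNge; apply: contra_notN out => t1; apply/andP.
exists (t - 1); rewrite ?subr_gt0 // => s; rewrite ltr_norml => /andP[_ ts].
by rewrite !clamp01_1 //; lra.
Qed.

Variables (T : Type) (d : T -> T -> R).
Hypothesis hd : is_metric d.

Lemma lipschitz_at_clamp01 (D : T -> R) (a b : R) x :
  (forall y z, `|D y - D z| <= d y z) ->
  lipschitz_at d (fun y => clamp01 (a + b * D y))
    (\1_[set y | 0 <= a + b * D y <= 1] x * `|b|) x.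
Proof.
move=> hD; rewrite indicE.
have hb y : `|a + b * D x - (a + b * D y)| <= `|b| * d x y.
  rewrite (_ : _ - _ = b * (D x - D y)); last by ring.
  by rewrite normrM ler_wpM2l.
have [inx|outx] := pselect (0 <= a + b * D x <= 1).
  rewrite mem_set // mul1r; exists 1 => // y _.
  exact: le_trans (clamp01_lipschitz _ _) (hb y).
rewrite memNset // !mul0r; have [e e0 he] := clamp01_locally_const outx.
have b1 : 0 < `|b| + 1 by rewrite ltr_wpDl.
exists (e / (`|b| + 1)); first by rewrite divr_gt0.
move=> y; rewrite ltr_pdivlMr // => hy.
rewrite (he (a + b * D y)) ?subrr ?normr0 ?mul0r //; apply: le_lt_trans (hb y) _.
by have := is_metric_ge0 hd x y; nra.
Qed.

End Clamp.

Lemma trivIset_mem (T I : Type) (F : I -> set T) i j x :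
  trivIset setT F -> F i x -> F j x -> i = j.
Proof. by move=> tF Fi Fj; apply: tF => //; exists x. Qed.

Section RealProbability.
Variables (R : realType) (dsp : measure_display) (T : measurableType dsp)
  (mu : probability T R).

Definition pr (X : set T) : R := fine (mu X).

Lemma prE X : measurable X -> mu X = (pr X)%:E.
Proof. by move=> mX; rewrite /pr fineK // fin_num_measure. Qed.

Lemma pr_ge0 X : 0 <= pr X.
Proof. by rewrite /pr fine_ge0. Qed.

Lemma pr_le1 X : measurable X -> pr X <= 1.
Proof. by move=> mX; rewrite -lee_fin -prE // probability_le1. Qed.

Lemma pr_gt0 X : measurable X -> (0 < mu X)%E -> 0 < pr X.
Proof. by move=> mX; rewrite prE // lte_fin. Qed.

Lemma pr_le X Y : measurable X -> measurable Y -> X `<=` Y -> pr X <= pr Y.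
Proof. by move=> mX mY XY; rewrite -lee_fin -!prE // le_measure // inE. Qed.

Lemma prU X Y : measurable X -> measurable Y -> X `&` Y = set0 ->
  pr (X `|` Y) = pr X + pr Y.
Proof.
move=> mX mY XY; apply: EFin_inj; rewrite EFinD -!prE //; last exact: measurableU.
exact: measureU.
Qed.

Lemma pr_bigsetU n (F : 'I_n -> set T) : (forall i, measurable (F i)) ->
  trivIset setT F -> pr (\big[setU/set0]_(i < n) F i) = \sum_(i < n) pr (F i).
Proof.
move=> mF tF; apply: EFin_inj; rewrite -prE; last exact: bigsetU_measurable.
rewrite measure_bigsetU_ord // -sumEFin; apply: eq_bigr => i _; exact: prE.
Qed.

Lemma pr_disjoint_le1 n (B : set T) (F : 'I_n -> set T) : measurable B ->
  (forall i, measurable (F i)) -> trivIset setT F ->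
  (forall i x, B x -> F i x -> False) ->
  pr B + \sum_(i < n) pr (F i) <= 1.
Proof.
move=> mB mF tF dB; rewrite -pr_bigsetU // -prU //; last 2 first.
- exact: bigsetU_measurable.
- apply/seteqP; split => // x [Bx]; rewrite -bigcup_seq => -[i _ Fi].
  exact: (dB i x Bx Fi).
by apply: pr_le1; apply: measurableU => //; exact: bigsetU_measurable.
Qed.

Local Open Scope ereal_scope.

(* Both integrals are suprema over simple functions, so no measurability is needed. *)
Lemma ge0_le_integral_nonmeas (f1 f2 : T -> \bar R) : (forall x, 0 <= f1 x) ->
  (forall x, f1 x <= f2 x) -> \int[mu]_x f1 x <= \int[mu]_x f2 x.
Proof.
move=> f10 f12; have f20 x : 0 <= f2 x by exact: le_trans (f10 x) (f12 x).
rewrite !ge0_integralTE //; apply: ereal_sup_le => _ [h hf <-].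
by exists h => // x; exact: le_trans (hf x) (f12 x).
Qed.

Lemma integral_sum_indic n (b : 'I_n -> R) (S : 'I_n -> set T) :
  (forall i, measurable (S i)) -> (forall i, (0 <= b i)%R) ->
  \int[mu]_x (\sum_(i < n) b i * \1_(S i) x)%:E = (\sum_(i < n) b i * pr (S i))%:E.
Proof.
move=> mS b0; under eq_integral do rewrite -sumEFin.
rewrite ge0_integral_sum //; last 2 first.
- by move=> i; apply/measurable_EFinP/measurable_funM.
- by move=> i x _; rewrite lee_fin mulr_ge0.
rewrite -sumEFin; apply: eq_bigr => i _; under eq_integral do rewrite EFinM.
rewrite ge0_integralZl ?lee_fin //; last exact/measurable_EFinP/measurable_indic.
by rewrite integral_indic // setIT EFinM -prE.
Qed.

Lemma integral_le_bound (f : T -> R) (M : R) : measurable_fun setT f ->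
  (forall x, 0 <= f x <= M)%R -> \int[mu]_x (f x)%:E <= M%:E.
Proof.
move=> mf hf; apply: le_trans (_ : \int[mu]_x (cst M%:E x) <= _).
  apply: ge0_le_integral => //.
  - by move=> x _; rewrite lee_fin; case/andP: (hf x).
  - exact/measurable_EFinP.
  - by move=> x _; rewrite lee_fin; case/andP: (hf x).
rewrite integral_cst // -[leRHS]mule1 le_eqVlt; apply/orP; left; apply/eqP.
by congr (_ * _); exact: probability_setT.
Qed.

End RealProbability.

Lemma sqr_sum_indic_trivIset (R : realType) (T : Type) n (a : 'I_n -> R)
    (P : 'I_n -> set T) x :
  trivIset setT P -> (\sum_i a i * \1_(P i) x) ^+ 2 = \sum_i a i ^+ 2 * \1_(P i) x.
Proof.
move=> tP; have [[i Pi]|nP] := pselect (exists i, P i x); last first.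
  by rewrite !big1 ?expr0n // => j _; rewrite indicE memNset ?mulr0 // => Pj; apply: nP; exists j.
suff sum_at_i (b : 'I_n -> R) : \sum_j b j * \1_(P j) x = b i by rewrite !sum_at_i.
rewrite (bigD1 i) //= indicE mem_set // mulr1 big1 ?addr0 // => j ji.
by rewrite indicE memNset ?mulr0 // => Pj; move: ji; rewrite (trivIset_mem tP Pj Pi) eqxx.
Qed.

Section TestFamily.
Variables (R : realType) (dsp : measure_display) (T : measurableType dsp)
  (d : T -> T -> R) (mu : probability T R) (k : nat).
Variables (F : 'I_k.+1 -> T -> R) (S C : 'I_k.+1 -> set T) (L : 'I_k.+1 -> R).
Hypothesis hd : is_metric d.
Hypothesis mF : forall i, measurable_fun setT (F i).
Hypothesis F01 : forall i x, 0 <= F i x <= 1.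
Hypothesis mS : forall i, measurable (S i).
Hypothesis mC : forall i, measurable (C i).
Hypothesis F_plateau : forall i x, C i x -> F i x = 1.
Hypothesis F_off_plateau : forall i j x, i != j -> C i x -> F j x = 0.
Hypothesis C_gt0 : forall i, (0 < mu (C i))%E.
Hypothesis F_lip : forall i x, lipschitz_at d (F i) (\1_(S i) x * L i) x.
Hypothesis S_triv : trivIset setT S.
Hypothesis L_ge0 : forall i, 0 <= L i.

Let comb (c : 'I_k.+1 -> R) x := \sum_i c i * F i x.

Lemma comb_plateau c i x : C i x -> comb c x = c i.
Proof.
move=> Ci; rewrite /comb (bigD1 i) //= F_plateau // mulr1 big1 ?addr0 // => j ji.
by rewrite (F_off_plateau (i := i)) ?mulr0 // eq_sym.
Qed.

Lemma plateau_trivIset : trivIset setT C.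
Proof.
move=> i j _ _ [x [Ci Cj]]; apply/eqP; apply: contraT => ij.
by move: (F_off_plateau ij Ci); rewrite F_plateau // => /eqP; rewrite oner_eq0.
Qed.

Lemma measurable_comb c : measurable_fun setT (comb c).
Proof. by apply: measurable_sum => i; apply: measurable_funM. Qed.

Lemma local_lip_comb_sqr_le c x :
  (local_lip d (comb c) x * local_lip d (comb c) x <=
   (\sum_i (c i ^+ 2 * L i ^+ 2) * \1_(S i) x)%:E)%E.
Proof.
have K0 : 0 <= \sum_i `|c i| * (\1_(S i) x * L i).
  by apply: sumr_ge0 => i _; rewrite !mulr_ge0.
apply: le_trans (local_lip_sqr_le hd K0 (lipschitz_at_sum _ c (fun i => F_lip i x))) _.
under eq_bigr do rewrite mulrCA mulrC.
rewrite lee_fin sqr_sum_indic_trivIset //.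
by apply: ler_sum => i _; rewrite exprMn -normrX ger0_norm ?sqr_ge0.
Qed.

Lemma integral_local_lip_comb_le c :
  (\int[mu]_x (local_lip d (comb c) x * local_lip d (comb c) x) <=
   (\sum_i (c i ^+ 2 * L i ^+ 2) * pr mu (S i))%:E)%E.
Proof.
rewrite -integral_sum_indic // => [|i]; last by rewrite mulr_ge0 ?sqr_ge0.
apply: ge0_le_integral_nonmeas => x; last exact: local_lip_comb_sqr_le.
by apply: mule_ge0; exact: local_lip_ge0.
Qed.

Lemma integral_comb_sqr_ge c :
  ((\sum_i c i ^+ 2 * pr mu (C i))%:E <= \int[mu]_x ((comb c x) ^+ 2)%:E)%E.
Proof.
rewrite -integral_sum_indic // => [|i]; last exact: sqr_ge0.
apply: ge0_le_integral => //.
- by move=> x _; rewrite lee_fin sumr_ge0 // => i _; rewrite mulr_ge0 ?sqr_ge0.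
- apply/measurable_EFinP/measurable_sum => i.
  by apply: measurable_funM => //; exact: measurable_indic.
- exact/measurable_EFinP/measurable_funX/measurable_comb.
move=> x _; rewrite lee_fin.
have [[i Ci]|nC] := pselect (exists i, C i x); last first.
  rewrite big1 ?sqr_ge0 // => j _; rewrite indicE memNset ?mulr0 // => Cj.
  by apply: nC; exists j.
rewrite (comb_plateau c Ci) (bigD1 i) //= indicE mem_set // mulr1 big1 ?addr0 // => j ji.
rewrite indicE memNset ?mulr0 // => Cj.
by move: ji; rewrite (trivIset_mem plateau_trivIset Cj Ci) eqxx.
Qed.

Lemma integral_comb_sqr_le c :
  (\int[mu]_x ((comb c x) ^+ 2)%:E <= ((\sum_i `|c i|) ^+ 2)%:E)%E.
Proof.
apply: integral_le_bound; first exact/measurable_funX/measurable_comb.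
move=> x; rewrite sqr_ge0 -real_normK ?num_real // lerXn2r ?nnegrE ?sumr_ge0 //.
apply: le_trans (ler_norm_sum _ _ _) _; apply: ler_sum => i _.
have /andP[F0 F1] := F01 i x.
by rewrite normrM (ger0_norm F0) ler_piMr.
Qed.

Lemma rayleigh_comb_le c (B : R) i0 : c i0 != 0 -> 0 <= B ->
  (forall i, L i ^+ 2 * pr mu (S i) <= B * pr mu (C i)) ->
  (rayleigh d mu (comb c) <= B%:E)%E.
Proof.
move=> ci0 B0 hB.
set Den := \sum_i c i ^+ 2 * pr mu (C i).
have Den0 : 0 < Den.
  have c0 : 0 < c i0 ^+ 2 by rewrite lt_neqAle sqr_ge0 andbT eq_sym sqrf_eq0.
  rewrite /Den (bigD1 i0) //=; apply: ltr_wpDr; last exact: mulr_gt0 c0 (pr_gt0 _ _).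
  by rewrite sumr_ge0 // => i _; rewrite mulr_ge0 ?sqr_ge0 ?pr_ge0.
set I2 := (\int[mu]_x ((comb c x) ^+ 2)%:E)%E.
have I2E : I2 = (fine I2)%:E.
  have I2ge0 : (0 <= I2)%E.
    by apply: le_trans (integral_comb_sqr_ge c); rewrite lee_fin ltW.
  rewrite fineK // ge0_fin_numE //.
  exact: le_lt_trans (integral_comb_sqr_le c) (ltry _).
have DenI2 : Den <= fine I2 by rewrite -lee_fin -I2E integral_comb_sqr_ge.
have NumB : \sum_i (c i ^+ 2 * L i ^+ 2) * pr mu (S i) <= B * Den.
  rewrite /Den mulr_sumr; apply: ler_sum => i _.
  by rewrite -mulrA [B * _]mulrCA ler_wpM2l ?sqr_ge0.
rewrite /rayleigh -/I2; apply: le_trans (lee_wpmul2r _ (integral_local_lip_comb_le c)) _.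
  by rewrite lee_fin invr_ge0 (le_trans (ltW Den0)).
rewrite -EFinM lee_fin ler_pdivrMr ?(lt_le_trans Den0) //.
by apply: le_trans NumB _; rewrite ler_wpM2l.
Qed.

Lemma test_family_H1 i : H1 d mu (F i).
Proof.
split => //.
  apply: le_lt_trans (ltry 1%R); apply: integral_le_bound; first exact: measurable_funX.
  by move=> x; have /andP[F0 F1] := F01 i x; rewrite sqr_ge0 expr_le1.
apply: le_lt_trans (ltry (L i ^+ 2)); apply: le_trans (_ : _ <= \int[mu]_x (L i ^+ 2)%:E)%E _.
  apply: ge0_le_integral_nonmeas => x; first by apply: mule_ge0; apply: local_lip_ge0.
  apply: (local_lip_sqr_le hd (L_ge0 i)); apply: lipschitz_at_le (F_lip i x) => //.
  by rewrite ler_piMl // indicE; case: (_ \in _); rewrite ?ler01.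
by apply: integral_le_bound => // x; rewrite sqr_ge0 lexx.
Qed.

Lemma test_family_indep c : {ae mu, forall x, comb c x = 0} -> forall i, c i = 0.
Proof.
move=> [N [mN N0 hN]] i.
have [x Ci Nx] : exists2 x, C i x & ~ N x.
  apply: contrapT => hn.
  have CN : C i `<=` N by move=> x Cx; apply: contrapT => Nx; apply: hn; exists x.
  have muN0 : mu N = 0%E := N0.
  have : (mu (C i) <= mu N)%E := le_measure mu (mem_set (mC i)) (mem_set mN) CN.
  by rewrite muN0 => /(lt_le_trans (C_gt0 i)); rewrite ltxx.
by rewrite -(comb_plateau c Ci); apply: contrapT => nP; apply: Nx; apply: hN.
Qed.

Lemma lambda_k_le_test_family (B : R) : 0 <= B ->
  (forall i, L i ^+ 2 * pr mu (S i) <= B * pr mu (C i)) ->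
  (lambda_k d mu k <= B%:E)%E.
Proof.
move=> B0 hB; apply: le_trans (ereal_inf_lbound _) _.
  by exists F => //; split; [exact: test_family_H1|exact: test_family_indep].
by apply: ge_ereal_sup => _ [c [i ci] <-]; exact: rayleigh_comb_le ci B0 hB.
Qed.

End TestFamily.

Section RealInequalities.
Variable R : realType.

Lemma exists_le_mean (N : nat) (x : nat -> R) (M : R) : (0 < N)%N ->
  \sum_(0 <= j < N) x j <= M -> exists2 j, (j < N)%N & x j <= M / N%:R.
Proof.
move=> N0; rewrite big_mkord => hs; apply: contrapT => hn.
have : \sum_(j < N) (M / N%:R) < \sum_(j < N) x j.
  apply: ltr_sum => [|j _]; first by apply/hasP; exists (Ordinal N0); rewrite ?mem_index_enum.
  by rewrite ltNge; apply/negP => hj; apply: hn; exists j.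
rewrite sumr_const card_ord -[_ *+ N]mulr_natr divfK ?pnatr_eq0 -?lt0n //.
by move=> /lt_le_trans /(_ hs); rewrite ltxx.
Qed.

Lemma ln_ge1BV (t : R) : 0 < t -> 1 - t^-1 <= ln t.
Proof. by move=> t0; have := expR_ge1Dx (- ln t); rewrite expRN lnK ?posrE //; lra. Qed.

Lemma expR_le1D2x (x : R) : 0 <= x -> x <= 1 / 2 -> expR x <= 1 + 2 * x.
Proof.
move=> x0 x1; have := expR_ge1Dx (- x); rewrite expRN => h.
have ex := expR_gt0 x.
have : (1 - x) * expR x <= 1 by have := ler_wpM2r (ltW ex) h; rewrite mulVf ?gt_eqF.
nra.
Qed.

End RealInequalities.

Section BorelMeasurability.
Variables (R : realType) (dsp : measure_display) (T : measurableType dsp)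
  (d : T -> T -> R).
Hypothesis hd : is_metric d.
Hypothesis hB : @measurable dsp T = <<s [set U | metric_open d U] >>.

Lemma metric_open_dist_to_gt (V : set T) (a : R) : V !=set0 ->
  metric_open d [set y | a < dist_to d V y].
Proof.
move=> V0 y /= ay; exists (dist_to d V y - a); first by rewrite subr_gt0.
by move=> z hz /=; have := dist_to_triangle hd V0 y z; lra.
Qed.

Lemma measurable_dist_to (V : set T) : V !=set0 -> measurable_fun setT (dist_to d V).
Proof.
move=> V0; apply: (measurability _ (RGenOInfty.measurableE R)) => //.
move=> /= _ [_ [x ->] <-]; rewrite setTI hB; apply: sub_sigma_algebra.
rewrite (_ : _ @^-1` _ = [set y | x < dist_to d V y]); first exact: metric_open_dist_to_gt.
by apply/seteqP; split => y; rewrite /= in_itv /= andbT.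
Qed.

Lemma measurable_preimage_cc (t : T -> R) (a b : R) : measurable_fun setT t ->
  measurable [set y | a <= t y <= b].
Proof.
move=> mt; have := mt measurableT _ (measurable_itv `[a, b]).
by rewrite setTI; congr measurable; apply/seteqP; split => y; rewrite /= in_itv.
Qed.

Lemma measurable_preimage_ge (t : T -> R) (a : R) : measurable_fun setT t ->
  measurable [set y | a <= t y].
Proof.
move=> mt; have := mt measurableT _ (measurable_itv `[a, +oo[).
by rewrite setTI; congr measurable; apply/seteqP; split => y; rewrite /= in_itv /= andbT.
Qed.

Lemma measurable_clamp01_affine (t : T -> R) (a b : R) : measurable_fun setT t ->
  measurable_fun setT (fun y => clamp01 (a + b * t y)).
Proof.
move=> mt; apply: measurable_minr => //; apply: measurable_maxr => //.
by apply: measurable_funD => //; apply: measurable_funM.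
Qed.

Lemma measurable_affine_cc (t : T -> R) (a b : R) : measurable_fun setT t ->
  measurable [set y | 0 <= a + b * t y <= 1].
Proof.
by move=> mt; apply: measurable_preimage_cc; apply: measurable_funD => //; apply: measurable_funM.
Qed.

End BorelMeasurability.

Section OrdCons.
Variables (X : Type) (k : nat).

Definition ord_cons (x0 : X) (xs : 'I_k -> X) (j : 'I_k.+1) : X :=
  if unlift ord0 j is Some i then xs i else x0.

Lemma ord_cons0 x0 xs : ord_cons x0 xs ord0 = x0.
Proof. by rewrite /ord_cons unlift_none. Qed.

Lemma ord_consS x0 xs i : ord_cons x0 xs (lift ord0 i) = xs i.
Proof. by rewrite /ord_cons liftK. Qed.

End OrdCons.

Lemma ord0_liftP k (P : 'I_k.+1 -> Prop) :
  P ord0 -> (forall i, P (lift ord0 i)) -> forall j, P j.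
Proof. by move=> h0 hl j; case: (unliftP ord0 j) => [i ->|->]. Qed.

Section Construction.
Variables (R : realType) (dsp : measure_display) (T : measurableType dsp)
  (d : T -> T -> R) (mu : probability T R) (k : nat) (A : 'I_k -> set T).
Hypothesis hd : is_metric d.
Hypothesis hB : @measurable dsp T = <<s [set U | metric_open d U] >>.
Hypothesis k0 : (0 < k)%N.
Hypothesis mA : forall i, measurable (A i).
Hypothesis hD : in_Delta (fun i => fine (mu (A i))).
Hypothesis hr : (0 < half_min_dist d A < +oo)%E.
Hypothesis hA0 : (0 < mu (A0 d A))%E.
Hypothesis hA : forall i, (0 < mu (A i))%E.

Let r := fine (half_min_dist d A).

Lemma half_min_distE : half_min_dist d A = r%:E.
Proof. by case/andP: hr => h1 h2; rewrite /r fineK // ge0_fin_numE // ltW. Qed.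

Lemma r_gt0 : 0 < r.
Proof. by case/andP: hr; rewrite half_min_distE lte_fin. Qed.

Lemma A_sep i j x y : i != j -> A i x -> A j y -> 2 * r <= d x y.
Proof.
move=> ij Ax Ay.
have h1 : (ereal_inf [set set_dist d (A p.1) (A p.2) | p in [set p | p.1 != p.2]]
   <= set_dist d (A i) (A j))%E by apply: ereal_inf_lbound; exists (i, j).
have h2 : (set_dist d (A i) (A j) <= (d x y)%:E)%E.
  by apply: ereal_inf_lbound; exists x => //; exists y.
have : (half_min_dist d A <= (1 / 2)%:E * (d x y)%:E)%E.
  exact: lee_wpmul2l _ (le_trans h1 h2).
by rewrite half_min_distE -EFinM lee_fin; lra.
Qed.

Lemma A_trivIset : trivIset setT A.
Proof.
move=> i j _ _ [x [Ai Aj]]; apply/eqP; apply: contraT => ij.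
by have := A_sep ij Ai Aj; rewrite is_metric_xx //; have := r_gt0; lra.
Qed.

Lemma A_neq0 i : A i !=set0.
Proof.
apply/set0P/negP => /eqP Ai0; have := hA i.
by rewrite Ai0 measure0 ltxx.
Qed.

Let U := \bigcup_(i in [set: 'I_k]) A i.

Lemma U_neq0 : U !=set0.
Proof. by have [x Ax] := A_neq0 (Ordinal k0); exists x; exists (Ordinal k0). Qed.

Let dU := dist_to d U.
Let dA i := dist_to d (A i).

Lemma A0E : A0 d A = [set y | r <= dU y].
Proof.
rewrite /A0 /enlarge half_min_distE; apply/seteqP; split => x /=.
  move=> nA; rewrite leNgt; apply/negP => /(dist_to_lt U_neq0) [y Uy dy].
  by apply: nA; exists y; rewrite ?lte_fin.
move=> rd [y Uy]; rewrite lte_fin; have := dist_to_le hd x Uy; rewrite -/dU; lra.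
Qed.

Lemma dU_le_dA i x : dU x <= dA i x.
Proof. by apply: (dist_to_subset hd); [move=> y Ay; exists i|exact: A_neq0]. Qed.

Lemma dA_eq0 i x : A i x -> dA i x = 0.
Proof. exact: (dist_to_eq0 hd (A_neq0 i)). Qed.

Lemma dU_eq0 i x : A i x -> dU x = 0.
Proof. by move=> Ax; apply: (dist_to_eq0 hd U_neq0); exists i. Qed.

Lemma dA_sep i j x : i != j -> 2 * r <= dA i x + dA j x.
Proof.
move=> ij; suff : 2 * r - dA i x <= dA j x by lra.
apply: (dist_to_glb (A_neq0 j)) => z Az; suff : 2 * r - d x z <= dA i x by lra.
apply: (dist_to_glb (A_neq0 i)) => y Ay.
by have := A_sep ij Ay Az; have := is_metric_triangle hd y x z; rewrite (is_metric_sym hd y x); lra.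
Qed.

Lemma measurable_dU : measurable_fun setT dU.
Proof. exact (measurable_dist_to hd hB U_neq0). Qed.

Lemma measurable_dA i : measurable_fun setT (dA i).
Proof. exact (measurable_dist_to hd hB (A_neq0 i)). Qed.

Lemma measurable_far s : measurable [set y | s <= dU y].
Proof. exact: measurable_preimage_ge measurable_dU. Qed.

Lemma measurable_A0 : measurable (A0 d A).
Proof. by rewrite A0E; apply: measurable_far. Qed.

Let a i := pr mu (A i).
Let a0 := pr mu (A0 d A).

Lemma a_gt0 i : 0 < a i.
Proof. exact: pr_gt0 (mA i) (hA i). Qed.

Lemma a0_gt0 : 0 < a0.
Proof. exact: pr_gt0 measurable_A0 hA0. Qed.

Lemma pr_off_A_le (X : set T) : measurable X -> (forall i x, X x -> ~ A i x) ->
  pr mu X <= 1 - \sum_i a i.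
Proof. by move=> mX hX; rewrite lerBrDr; apply: pr_disjoint_le1 A_trivIset _. Qed.

Lemma pr_far_le s : 0 < s -> pr mu [set y | s <= dU y] <= 1 - \sum_i a i.
Proof.
move=> s0; apply: pr_off_A_le (measurable_far s) _ => i x /= sx Ax.
by move: sx; rewrite (dU_eq0 Ax); lra.
Qed.

Let m := min_log_ratio d mu A.

Lemma min_log_ratio_attained :
  exists i1, m = ln (a i1 / a0) /\ forall i, m <= ln (a i / a0).
Proof.
have [i1 _ e] := @eq_bigmin _ _ _ (+oo%E) (Ordinal k0) (fun _ => true)
  (fun i => (ln (a i / a0))%:E) isT (fun i _ => leey _).
exists i1; rewrite /m /min_log_ratio e; split => // i.
by have := bigmin_le (+oo)%E i (fun i => (ln (a i / a0))%:E); rewrite e lee_fin.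
Qed.

Section MinimalIndex.
Variable i1 : 'I_k.
Hypothesis m_i1 : m = ln (a i1 / a0).
Hypothesis m_min : forall i, m <= ln (a i / a0).

Lemma a_i1_min i : a i1 <= a i.
Proof.
have := m_min i; rewrite m_i1 ler_ln ?posrE ?divr_gt0 ?a_gt0 ?a0_gt0 //.
by rewrite ler_pM2r // invr_gt0 a0_gt0.
Qed.

Lemma a_i1_ge : 1 - \sum_i a i <= a i1.
Proof. by case: hD => _ _ /(_ i1); rewrite /a /pr; lra. Qed.

Lemma a0_le_a_i1 : a0 <= a i1.
Proof.
apply: le_trans _ a_i1_ge; apply: pr_off_A_le measurable_A0 _.
by move=> i x; rewrite A0E /= => + Ax; rewrite (dU_eq0 Ax); have := r_gt0; lra.
Qed.

Lemma m_ge0 : 0 <= m.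
Proof. by rewrite m_i1 ln_ge0 // ler_pdivlMr ?a0_gt0 // mul1r a0_le_a_i1. Qed.

(* Mass between A_0 and the A_i is at most 1 - sum a - a_0 <= a_i1 - a_0, and
   ln t >= 1 - 1/t at t = a_i1 / a_0 turns this into m a_i1. *)
Lemma pr_gap_le (X : set T) : measurable X -> (forall x, X x -> ~ A0 d A x) ->
  (forall j x, X x -> ~ A j x) -> forall i, pr mu X <= m * a i.
Proof.
move=> mX hX0 hXA i.
have XA0 : X `&` A0 d A = set0 by apply/seteqP; split => // x [Xx]; apply: hX0.
have hle : pr mu X + a0 <= 1 - \sum_j a j.
  rewrite -prU //; last exact: measurable_A0.
  apply: pr_off_A_le => [|j x [Xx|]]; first exact: measurableU measurable_A0.
    exact: hXA.
  by rewrite A0E /= => + Ax; rewrite (dU_eq0 Ax); have := r_gt0; lra.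
have hm : a i1 - a0 <= m * a i1.
  have := ln_ge1BV (divr_gt0 (a_gt0 i1) a0_gt0); rewrite -m_i1 invf_div => h.
  have : a i1 * (1 - a0 / a i1) <= a i1 * m by rewrite ler_wpM2l // ltW ?a_gt0.
  by rewrite mulrBr mulr1 mulrCA divff ?gt_eqF ?a_gt0 // mulr1 mulrC.
by have := a_i1_ge; have := ler_wpM2l m_ge0 (a_i1_min i); lra.
Qed.

Let far s := pr mu [set y | s <= dU y].

Lemma far_antitone s t : s <= t -> far t <= far s.
Proof. by move=> st; apply: pr_le (measurable_far _) (measurable_far _) _ => y /=; lra. Qed.

Lemma a0_le_far s : s <= r -> a0 <= far s.
Proof. by move=> sr; apply: pr_le measurable_A0 (measurable_far _) _; rewrite A0E => y /=; lra. Qed.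

Lemma far_half_le : far (r / 2) <= a i1.
Proof. by apply: le_trans (pr_far_le _) a_i1_ge; rewrite divr_gt0 ?r_gt0. Qed.

Let N := (2 * (Num.truncn m).+1)%N.

Lemma N_gt0 : (0 < N)%N.
Proof. by rewrite muln_gt0. Qed.

Lemma Nr_gt0 : (0 : R) < N%:R.
Proof. by rewrite ltr0n N_gt0. Qed.

Lemma m_div_N_le : m / N%:R <= 1 / 2.
Proof.
have t0 : (0 : R) < (Num.truncn m).+1%:R by rewrite ltr0n.
by have := truncnS_gt m; rewrite ler_pdivrMr ?Nr_gt0 // /N natrM; lra.
Qed.

Lemma N_le : (N%:R : R) <= 2 * m + 2.
Proof. by have := truncn_le m; rewrite m_ge0 /N natrM -natr1; lra. Qed.

Let delta := r / (2 * N%:R).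
Let level (j : nat) : R := r / 2 + j%:R * delta.

Lemma delta_gt0 : 0 < delta.
Proof. by rewrite divr_gt0 ?r_gt0 // mulr_gt0 ?Nr_gt0. Qed.

Lemma level_S j : level j.+1 = level j + delta.
Proof. by rewrite /level -natr1; ring. Qed.

Lemma level_ge j : r / 2 <= level j.
Proof. by rewrite /level lerDl; apply: mulr_ge0 => //; exact: ltW delta_gt0. Qed.

Lemma level_le_r j : (j <= N)%N -> level j <= r.
Proof.
move=> jN; have Ndelta : N%:R * delta = r / 2.
  by rewrite /delta; field; rewrite gt_eqF ?Nr_gt0.
have : (j%:R : R) * delta <= N%:R * delta.
  by rewrite ler_wpM2r ?ler_nat //; exact: ltW delta_gt0.
by rewrite /level; lra.
Qed.

Lemma level0 : level 0 = r / 2.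
Proof. by rewrite /level mul0r addr0. Qed.

Lemma levelN : level N = r.
Proof. by rewrite /level /delta; field; rewrite gt_eqF ?Nr_gt0. Qed.

(* Since ln far decreases by at most m over the N steps of the grid level, some
   step decreases it by at most m / N <= 1/2. *)
Lemma exists_thin_shell :
  exists2 j, (j < N)%N & far (level j) <= far (level j.+1) * (1 + 2 * (m / N%:R)).
Proof.
have far_gt0 j : (j <= N)%N -> 0 < far (level j).
  by move=> jN; apply: lt_le_trans a0_gt0 (a0_le_far (level_le_r jN)).
pose x j := ln (far (level j)) - ln (far (level j.+1)).
have sum_x : \sum_(0 <= j < N) x j <= m.
  rewrite (telescope_sumr_eq (fun j => - ln (far (level j)))) //; last by move=> j _; rewrite /x; ring.
  rewrite level0 levelN m_i1 lnM ?posrE ?a_gt0 ?invr_gt0 ?a0_gt0 // lnV ?posrE ?a0_gt0 //.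
  have : ln (far (r / 2)) <= ln (a i1).
    by rewrite ler_ln ?posrE ?far_half_le ?a_gt0 // -level0 far_gt0.
  have : ln a0 <= ln (far r) by rewrite ler_ln ?posrE ?a0_gt0 ?a0_le_far // -levelN far_gt0.
  lra.
have [j jN xj] := exists_le_mean N_gt0 sum_x.
have g1 := far_gt0 j.+1 jN; have g0 := far_gt0 j (ltnW jN).
exists j => //; rewrite [X in _ <= X]mulrC -ler_pdivrMr //.
have x0 : 0 <= x j by rewrite subr_ge0 ler_ln ?posrE ?far_antitone // level_S lerDl ltW ?delta_gt0.
have := expR_le1D2x x0 (le_trans xj m_div_N_le).
by rewrite /x exp.expRD expRN !lnK ?posrE // => h; move: xj; rewrite /x; lra.
Qed.

Section ThinShell.
Variable j : nat.
Hypothesis jN : (j < N)%N.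
Hypothesis thin : far (level j) <= far (level j.+1) * (1 + 2 * (m / N%:R)).

Let h := delta / 2.
Let slope0 := h^-1.
Let off0 := - (level j / h).
Let slopeA := - (6 / r).

Let S0 := [set y | 0 <= off0 + slope0 * dU y <= 1].
Let C0 := [set y | level j.+1 <= dU y].
Let SA i := [set y | 0 <= 2 + slopeA * dA i y <= 1].

(* Index ord0 carries the function living far from the A_i, index lift ord0 i
   the one attached to A_i. *)
Let F := ord_cons (fun y => clamp01 (off0 + slope0 * dU y)) (fun i y => clamp01 (2 + slopeA * dA i y)).
Let S := ord_cons S0 SA.
Let C := ord_cons C0 A.
Let L := ord_cons `|slope0| (fun _ : 'I_k => `|slopeA|).

Lemma h_gt0 : 0 < h.
Proof. by rewrite divr_gt0 ?delta_gt0. Qed.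

Lemma affine0E t : off0 + slope0 * t = (t - level j) / h.
Proof. by rewrite /off0 /slope0; field; rewrite gt_eqF ?h_gt0. Qed.

Lemma affineAE t : 2 + slopeA * t = 2 - 6 * (t / r).
Proof. by rewrite /slopeA; field; rewrite gt_eqF ?r_gt0. Qed.

Lemma S0_bounds y : S0 y -> level j <= dU y <= level j + h.
Proof.
rewrite /S0 /= affine0E ler_pdivlMr ?ler_pdivrMr ?h_gt0 // mul0r mul1r.
by case/andP => h1 h2; apply/andP; split; lra.
Qed.

Lemma SA_bounds i y : SA i y -> r / 6 <= dA i y <= r / 3.
Proof.
have r0 := r_gt0; rewrite /SA /= affineAE => /andP[h1 h2].
have e1 : dA i y / r <= 1 / 3 by lra.
have e2 : 1 / 6 <= dA i y / r by lra.
move: e1 e2; rewrite ler_pdivrMr // ler_pdivlMr // => e1 e2.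
by apply/andP; split; lra.
Qed.

Lemma C0_plateau y : C0 y -> 1 <= off0 + slope0 * dU y.
Proof. by rewrite /C0 /= level_S affine0E ler_pdivlMr ?h_gt0 // /h; have := delta_gt0; lra. Qed.

Lemma measurable_test_F p : measurable_fun setT (F p).
Proof.
by move: p; apply: ord0_liftP => [|i]; rewrite /F ?ord_cons0 ?ord_consS;
  apply: measurable_clamp01_affine; [exact: measurable_dU|exact: measurable_dA].
Qed.

Lemma test_F_01 p x : 0 <= F p x <= 1.
Proof.
by move: p; apply: ord0_liftP => [|i]; rewrite /F ?ord_cons0 ?ord_consS clamp01_ge0 clamp01_le1.
Qed.

Lemma measurable_test_S p : measurable (S p).
Proof.
by move: p; apply: ord0_liftP => [|i]; rewrite /S ?ord_cons0 ?ord_consS;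
  apply: measurable_affine_cc; [exact: measurable_dU|exact: measurable_dA].
Qed.

Lemma measurable_test_C p : measurable (C p).
Proof.
by move: p; apply: ord0_liftP => [|i]; rewrite /C ?ord_cons0 ?ord_consS; [exact: measurable_far|].
Qed.

Lemma test_F_plateau p x : C p x -> F p x = 1.
Proof.
move: p; apply: ord0_liftP => [|i]; rewrite /F /C ?ord_cons0 ?ord_consS => Cx.
  exact/clamp01_1/C0_plateau.
by rewrite clamp01_1 // (dA_eq0 Cx) mulr0 addr0 ler1n.
Qed.

Lemma test_F_off_plateau p q x : p != q -> C p x -> F q x = 0.
Proof.
have r0 := r_gt0; have h0 := h_gt0.
move: p q; apply: ord0_liftP => [|i]; apply: ord0_liftP => [|i'];
  rewrite /F /C ?ord_cons0 ?ord_consS ?eqxx // => pq Cx; apply: clamp01_0.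
- have hx : r / 2 <= dA i' x := le_trans (level_ge j.+1) (le_trans Cx (dU_le_dA i' x)).
  have : 1 / 2 <= dA i' x / r by rewrite ler_pdivlMr //; lra.
  by rewrite affineAE; lra.
- by rewrite affine0E (dU_eq0 Cx) ler_pdivrMr // mul0r; have := level_ge j; lra.
- rewrite inj_eq in pq; last exact: lift_inj.
  have := dA_sep x pq; rewrite (dA_eq0 Cx) add0r => hx.
  have : 2 <= dA i' x / r by rewrite ler_pdivlMr //; lra.
  by rewrite affineAE; lra.
Qed.

Lemma test_C_gt0 p : (0 < mu (C p))%E.
Proof.
move: p; apply: ord0_liftP => [|i]; rewrite /C ?ord_cons0 ?ord_consS //.
have A0C0 : A0 d A `<=` C0 by rewrite A0E /C0 => y /=; have := level_le_r jN; lra.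
have : (mu (A0 d A) <= mu C0)%E.
  exact: le_measure (mem_set measurable_A0) (mem_set (measurable_far _)) A0C0.
exact: lt_le_trans hA0.
Qed.

Lemma test_F_lip p x : lipschitz_at d (F p) (\1_(S p) x * L p) x.
Proof.
move: p; apply: ord0_liftP => [|i]; rewrite /F /S /L ?ord_cons0 ?ord_consS;
  apply: (lipschitz_at_clamp01 hd) => y z;
  [exact: (dist_to_lipschitz hd U_neq0)|exact: (dist_to_lipschitz hd (A_neq0 i))].
Qed.

Lemma test_S_trivIset : trivIset setT S.
Proof.
suff disj p q x : p != q -> S p x -> S q x -> False.
  by move=> p q _ _ [x [Sp Sq]]; apply/eqP; apply: contraT => pq; case: (disj p q x pq Sp Sq).
have r0 := r_gt0.
move: p q; apply: ord0_liftP => [|i]; apply: ord0_liftP => [|i'];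
  rewrite /S ?ord_cons0 ?ord_consS ?eqxx // => pq.
- move=> /S0_bounds/andP[+ _] /SA_bounds/andP[_ +].
  by have := level_ge j; have := dU_le_dA i' x; lra.
- move=> /SA_bounds/andP[_ +] /S0_bounds/andP[+ _].
  by have := level_ge j; have := dU_le_dA i x; lra.
- rewrite inj_eq in pq; last exact: lift_inj.
  move=> /SA_bounds/andP[_ +] /SA_bounds/andP[_ +].
  by have := dA_sep x pq; lra.
Qed.

Lemma test_energy_bound p :
  L p ^+ 2 * pr mu (S p) <= (r ^+ 2)^-1 * (64 * (m + 1) * m) * pr mu (C p).
Proof.
have r0 := r_gt0; have m0 := m_ge0.
move: p; apply: ord0_liftP => [|i]; rewrite /L /S /C ?ord_cons0 ?ord_consS.
  have mS0 : measurable S0 by apply: measurable_affine_cc measurable_dU.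
  have hS0 : pr mu S0 + far (level j.+1) <= far (level j).
    have dh := delta_gt0.
    rewrite -prU //; last 2 first.
    - exact: measurable_far.
    - by apply/seteqP; split => // y [/S0_bounds/andP[_ +]]; rewrite /= level_S /h; lra.
    rewrite /far; apply: pr_le; [exact: measurableU mS0 (measurable_far _)|exact: measurable_far|].
    by move=> y [/S0_bounds/andP[+ _]|]; rewrite /C0 /= ?level_S; lra.
  have NpS : N%:R * pr mu S0 <= 2 * m * far (level j.+1).
    have -> : 2 * m * far (level j.+1) = N%:R * (far (level j.+1) * (2 * (m / N%:R))).
      by field; rewrite gt_eqF ?Nr_gt0.
    by rewrite (ler_wpM2l (ltW Nr_gt0)); move: thin; rewrite mulrDr mulr1; lra.
  have -> : `|slope0| ^+ 2 = (r ^+ 2)^-1 * (16 * N%:R ^+ 2).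
    rewrite gtr0_norm ?invr_gt0 ?h_gt0 // /slope0 /h /delta.
    by field; rewrite !gt_eqF ?Nr_gt0.
  change (pr mu C0) with (far (level j.+1)); rewrite -!mulrA ler_wpM2l ?invr_ge0 ?sqr_ge0 //.
  have := N_le; have := pr_ge0 mu S0; have : 0 <= m * far (level j.+1) by rewrite mulr_ge0 ?pr_ge0.
  have := Nr_gt0; nra.
have hSA : pr mu (SA i) <= m * a i.
  apply: pr_gap_le; first exact: measurable_affine_cc (measurable_dA i).
    move=> x /SA_bounds/andP[_ +]; rewrite A0E /=; have := dU_le_dA i x; lra.
  move=> i' x /SA_bounds/andP[lo hi] Ax; have [ii'|ii'] := eqVneq i i'.
    by move: lo; rewrite ii' (dA_eq0 Ax); lra.
  by have := dA_sep x ii'; rewrite (dA_eq0 Ax); lra.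
have -> : `|slopeA| ^+ 2 = (r ^+ 2)^-1 * 36.
  by rewrite normrN gtr0_norm ?divr_gt0 //; field; rewrite gt_eqF.
rewrite -!mulrA ler_wpM2l ?invr_ge0 ?sqr_ge0 //.
change (pr mu (A i)) with (a i).
have : 0 <= m * a i by apply: mulr_ge0 => //; exact: ltW (a_gt0 i).
nra.
Qed.

Lemma lambda_k_le_shell : (lambda_k d mu k <= ((r ^+ 2)^-1 * (64 * (m + 1) * m))%:E)%E.
Proof.
apply: (lambda_k_le_test_family hd measurable_test_F test_F_01 measurable_test_S
  measurable_test_C test_F_plateau test_F_off_plateau test_C_gt0 test_F_lip
  test_S_trivIset) => [p||]; last exact: test_energy_bound.
- by move: p; apply: ord0_liftP => [|i]; rewrite /L ?ord_cons0 ?ord_consS.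
- by rewrite mulr_ge0 ?invr_ge0 ?sqr_ge0 // !mulr_ge0 // ?m_ge0 ?addr_ge0 ?m_ge0.
Qed.

End ThinShell.

End MinimalIndex.

Lemma lambda_k_le_psi :
  (lambda_k d mu k <= ((r ^+ 2)^-1 * psi (128 * m))%:E)%E.
Proof.
have [i1 [m_i1 m_min]] := min_log_ratio_attained.
have [j jN thin] := exists_thin_shell m_i1.
apply: le_trans (lambda_k_le_shell m_i1 m_min jN thin) _.
rewrite lee_fin ler_wpM2l ?invr_ge0 ?sqr_ge0 // /psi le_max.
have m0 := m_ge0 m_i1; have [m1|m1] := leP m 1; apply/orP; [left|right]; nra.
Qed.

End Construction.

Theorem proposition1p2 :
  exists c : Rdefinitions.R, 0 < c /\
  forall (dsp : measure_display) (T : measurableType dsp)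
    (d : T -> T -> Rdefinitions.R) (mu : probability T Rdefinitions.R)
    (k : nat) (A : 'I_k -> set T),
    is_metric d -> metric_complete d -> metric_separable d ->
    (@measurable dsp T = <<s [set U | metric_open d U] >>) ->
    (0 < k)%N ->
    (forall i, measurable (A i)) ->
    in_Delta (fun i => fine (mu (A i))) ->
    (lambda_k d mu k <= bound_rhs d mu A c)%E.
Proof.
exists (1 / 128); split; first by rewrite divr_gt0.
move=> dsp T d mu k A hd _ _ hB k0 mA hD.
rewrite /bound_rhs; case: asboolP => [[hr hA0 hA]|_]; last exact: leey.
by rewrite div1r invrK; exact: (lambda_k_le_psi hd hB k0 mA hD hr hA0 hA).
Qed.
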